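(* Let $X$ be a real Hilbert space, let $U$ be a closed affine subspace of $X$ and $V$ a nonempty closed convex subset of $X$, let $T:=T_{U,V}$, $v:=P_{\overline{\operatorname{ran}}(\mathrm{Id}-T)}0$, and assume $v\in\operatorname{ran}(\mathrm{Id}-T)$. Then for every $x\in X$, $P_UT^nx-P_UT^{n+1}x\to0$.
   Context: $T_{U,V}:=\mathrm{Id}-P_U+P_V(2P_U-\mathrm{Id})$, the Douglas–Rachford operator for the normal cones of $U$ and $V$; $P_C$ denotes projection onto $C$. *)

From Stdlib Require Import Reals Lra.
Open Scope R_scope.

Record HilbertSpace := {
  hcarrier :> Type;
  hzero : hcarrier;
  hadd : hcarrier -> hcarrier -> hcarrier;
  hopp : hcarrier -> hcarrier;
  hscal : R -> hcarrier -> hcarrier;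
  hinner : hcarrier -> hcarrier -> R;
  hadd_assoc : forall x y z, hadd x (hadd y z) = hadd (hadd x y) z;
  hadd_comm : forall x y, hadd x y = hadd y x;
  hadd_0 : forall x, hadd x hzero = x;
  hadd_opp : forall x, hadd x (hopp x) = hzero;
  hscal_1 : forall x, hscal 1 x = x;
  hscal_assoc : forall a b x, hscal a (hscal b x) = hscal (a * b) x;
  hscal_distr_l : forall a x y, hscal a (hadd x y) = hadd (hscal a x) (hscal a y);
  hscal_distr_r : forall a b x, hscal (a + b) x = hadd (hscal a x) (hscal b x);
  hinner_sym : forall x y, hinner x y = hinner y x;
  hinner_add_l : forall x y z, hinner (hadd x y) z = hinner x z + hinner y z;
  hinner_scal_l : forall a x y, hinner (hscal a x) y = a * hinner x y;
  hinner_pos : forall x, 0 <= hinner x x;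
  hinner_def : forall x, hinner x x = 0 -> x = hzero;
  hcomplete : forall u : nat -> hcarrier,
    (forall eps, eps > 0 -> exists N, forall m n, (m >= N)%nat -> (n >= N)%nat ->
        sqrt (hinner (hadd (u m) (hopp (u n))) (hadd (u m) (hopp (u n)))) < eps) ->
    exists l, forall eps, eps > 0 -> exists N, forall n, (n >= N)%nat ->
        sqrt (hinner (hadd (u n) (hopp l)) (hadd (u n) (hopp l))) < eps
}.

Arguments hzero {_}.
Arguments hadd {_}.
Arguments hopp {_}.
Arguments hscal {_}.
Arguments hinner {_}.

Definition hsub {X : HilbertSpace} (x y : X) : X := hadd x (hopp y).
Definition hnorm {X : HilbertSpace} (x : X) : R := sqrt (hinner x x).

Definition closure {X : HilbertSpace} (S : X -> Prop) : X -> Prop :=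
  fun x => forall eps, eps > 0 -> exists s, S s /\ hnorm (hsub x s) < eps.
Definition is_closed {X : HilbertSpace} (S : X -> Prop) : Prop :=
  forall x, closure S x -> S x.
Definition nonempty {X : HilbertSpace} (S : X -> Prop) : Prop := exists x, S x.
Definition convex {X : HilbertSpace} (S : X -> Prop) : Prop :=
  forall x y t, S x -> S y -> 0 <= t <= 1 -> S (hadd (hscal t x) (hscal (1 - t) y)).
Definition affine_subspace {X : HilbertSpace} (S : X -> Prop) : Prop :=
  nonempty S /\ forall x y t, S x -> S y -> S (hadd (hscal t x) (hscal (1 - t) y)).

Definition is_proj {X : HilbertSpace} (C : X -> Prop) (x p : X) : Prop :=
  C p /\ forall c, C c -> hnorm (hsub x p) <= hnorm (hsub x c).

Definition DR {X : HilbertSpace} (PU PV : X -> X) (x : X) : X :=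
  hadd (hsub x (PU x)) (PV (hsub (hscal 2 (PU x)) x)).

Definition ran_Id_minus {X : HilbertSpace} (T : X -> X) : X -> Prop :=
  fun y => exists x, y = hsub x (T x).

(* Write T := T_{U,V}, and let y0 be a point with y0 - T y0 = v, so v = p0 - q0 with
   p0 = P_U y0 and q0 = P_V (2 p0 - y0).  Minimality of v among the displacements
   x - T x (which include P_U q - q for every q in V) forces v to be orthogonal to U
   and to lie in the normal cone of V at q0.  Consequently P_U is invariant under
   translations along v, P_V(2 p0 - y0 + s v) = q0 for s >= 0, and the ray
   y_n := y0 - n v is a T-orbit with constant displacement v.  Firm nonexpansiveness
   of T, compared along the orbits of x and of y0, gives x_n - x_{n+1} - v -> 0;
   applying the nonexpansive P_U to x_n - v and x_{n+1}, whose P_U-images are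
   P_U x_n and P_U x_{n+1}, yields the claim. *)
From Stdlib Require Import Reals Lra Psatz.
Open Scope R_scope.

Lemma hinner_add_r {X : HilbertSpace} (x y z : X) :
  hinner z (hadd x y) = hinner z x + hinner z y.
Proof. rewrite !(hinner_sym X z). apply hinner_add_l. Qed.

Lemma hinner_scal_r {X : HilbertSpace} a (x y : X) :
  hinner y (hscal a x) = a * hinner y x.
Proof. rewrite !(hinner_sym X y). apply hinner_scal_l. Qed.

Lemma hinner_0_l {X : HilbertSpace} (y : X) : hinner hzero y = 0.
Proof. assert (H := hinner_add_l X hzero hzero y). rewrite hadd_0 in H. lra. Qed.

Lemma hinner_0_r {X : HilbertSpace} (y : X) : hinner y hzero = 0.
Proof. rewrite hinner_sym. apply hinner_0_l. Qed.

Lemma hinner_opp_l {X : HilbertSpace} (x y : X) : hinner (hopp x) y = - hinner x y.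
Proof.
  assert (H := hinner_add_l X x (hopp x) y). rewrite hadd_opp, hinner_0_l in H. lra.
Qed.

Lemma hinner_opp_r {X : HilbertSpace} (x y : X) : hinner y (hopp x) = - hinner y x.
Proof. rewrite !(hinner_sym X y). apply hinner_opp_l. Qed.

(* Bilinear expansion; the symmetric pairs [<a,b>], [<b,a>] are identified so that
   [lra]/[nra]/[ring] see them as one atom. *)
Ltac inner_expand :=
  unfold hsub in *;
  repeat rewrite ?hinner_add_l, ?hinner_add_r, ?hinner_scal_l, ?hinner_scal_r,
    ?hinner_0_l, ?hinner_0_r, ?hinner_opp_l, ?hinner_opp_r;
  repeat match goal with |- context [@hinner ?X ?a ?b] =>
    match goal with |- context [@hinner X b a] =>
      progress rewrite (hinner_sym X b a) end end.

Lemma hsub_eq {X : HilbertSpace} (a b : X) : hinner (hsub a b) (hsub a b) = 0 -> a = b.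
Proof.
  intro H. apply hinner_def in H. unfold hsub in H.
  rewrite <- (hadd_0 X a), <- (hadd_opp X b), (hadd_comm X b), hadd_assoc, H.
  rewrite hadd_comm. apply hadd_0.
Qed.

Lemma hnorm_le_sq {X : HilbertSpace} (a b : X) :
  hnorm a <= hnorm b -> hinner a a <= hinner b b.
Proof. intro H. apply sqrt_le_0; auto using hinner_pos. Qed.

Lemma sq_le_hnorm {X : HilbertSpace} (a b : X) :
  hinner a a <= hinner b b -> hnorm a <= hnorm b.
Proof. intro H. now apply sqrt_le_1_alt. Qed.

Lemma closure_sub {X : HilbertSpace} (S : X -> Prop) z : S z -> closure S z.
Proof.
  intros Hz eps He. exists z. split; auto.
  unfold hnorm, hsub. rewrite hadd_opp, hinner_0_l, sqrt_0. lra.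
Qed.

Lemma affine_subspace_convex {X : HilbertSpace} (U : X -> Prop) :
  affine_subspace U -> convex U.
Proof. intros [_ H] x y t Hx Hy _. auto. Qed.

Lemma nonpos_of_scaled_le a b : (forall t, 0 < t <= 1 -> t * a <= t * t * b) -> a <= 0.
Proof.
  intro H. destruct (Rle_dec a 0) as [|Ha]; auto. exfalso. apply Rnot_le_lt in Ha.
  destruct (Rle_dec b 0) as [Hb|Hb]; [specialize (H 1 ltac:(lra)); nra|].
  apply Rnot_le_lt in Hb.
  set (t := a / (a + b)).
  assert (Ht : t * (a + b) = a) by (unfold t; field; lra).
  assert (0 < t) by (unfold t; apply Rdiv_lt_0_compat; lra).
  clearbody t. specialize (H t ltac:(nra)).
  assert (0 < t * t * a) by (apply Rmult_lt_0_compat; nra). nra.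
Qed.

Lemma Un_cv_0_of_decrease (d e : nat -> R) :
  (forall n, 0 <= d n) -> (forall n, 0 <= e n) -> (forall n, d (S n) + e n <= d n) ->
  Un_cv e 0.
Proof.
  intros Hd0 He0 Hde.
  destruct (decreasing_cv d) as [l Hl].
  - intro n. specialize (Hde n). specialize (He0 n). lra.
  - exists 0. intros z [n ->]. unfold opp_seq. specialize (Hd0 n). lra.
  - intros eps Heps. destruct (Hl (eps / 2) ltac:(lra)) as [N HN]. exists N.
    intros n Hn. assert (A := HN n Hn). assert (B := HN (S n) ltac:(lia)).
    specialize (Hde n). specialize (He0 n). unfold R_dist in *.
    apply Rabs_def2 in A. apply Rabs_def2 in B. apply Rabs_def1; lra.
Qed.

Lemma Un_cv_hnorm_0 {X : HilbertSpace} (w : nat -> X) (e : nat -> R) :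
  (forall n, hinner (w n) (w n) <= e n) -> Un_cv e 0 -> Un_cv (fun n => hnorm (w n)) 0.
Proof.
  intros Hwe He eps Heps. destruct (He (eps * eps) ltac:(nra)) as [N HN]. exists N.
  intros n Hn. specialize (HN n Hn). specialize (Hwe n).
  assert (Hw := hinner_pos X (w n)). unfold R_dist in *. rewrite Rminus_0_r in *.
  rewrite Rabs_right in HN by lra. rewrite Rabs_right by (apply Rle_ge, sqrt_pos).
  unfold hnorm. rewrite <- (sqrt_square eps) by lra.
  apply sqrt_lt_1_alt. lra.
Qed.

Section Projections.

Variables (X : HilbertSpace) (C : X -> Prop).

Lemma proj_variational x p : convex C -> is_proj C x p ->
  forall c, C c -> hinner (hsub x p) (hsub c p) <= 0.
Proof.
  intros Hcv [Hp Hmin] c Hc.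
  cut (2 * hinner (hsub x p) (hsub c p) <= 0); [lra|].
  apply (nonpos_of_scaled_le _ (hinner (hsub c p) (hsub c p))). intros t Ht.
  assert (Hz := Hcv c p t Hc Hp ltac:(lra)).
  apply Hmin, hnorm_le_sq in Hz. revert Hz. inner_expand. intro. nra.
Qed.

Lemma proj_of_variational x p : C p ->
  (forall c, C c -> hinner (hsub x p) (hsub c p) <= 0) -> is_proj C x p.
Proof.
  intros Hp H. split; auto. intros c Hc. apply sq_le_hnorm.
  specialize (H c Hc). assert (Hq := hinner_pos X (hsub c p)).
  revert H Hq. inner_expand. intros. lra.
Qed.

Lemma proj_unique x p p' : convex C -> is_proj C x p -> is_proj C x p' -> p = p'.
Proof.
  intros Hc H1 H2. apply hsub_eq, Rle_antisym; [|apply hinner_pos].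
  assert (A := proj_variational x p Hc H1 p' (proj1 H2)).
  assert (B := proj_variational x p' Hc H2 p (proj1 H1)).
  revert A B. inner_expand. intros. lra.
Qed.

Lemma proj_of_mem c p : C c -> is_proj C c p -> p = c.
Proof.
  intros Hc [Hp Hm]. specialize (Hm c Hc). apply hnorm_le_sq in Hm.
  apply hsub_eq, Rle_antisym; [|apply hinner_pos]. revert Hm. inner_expand. intros. lra.
Qed.

Lemma affine_proj_orthogonal x p : affine_subspace C -> is_proj C x p ->
  forall c, C c -> hinner (hsub x p) (hsub c p) = 0.
Proof.
  intros HC Hp c Hc. assert (Hcv := affine_subspace_convex C HC).
  (* [2p - c] lies in [C] too, so both [c - p] and [p - c] are admissible directions. *)
  assert (A := proj_variational x p Hcv Hp c Hc).
  assert (B := proj_variational x p Hcv Hp _ (proj2 HC p c 2 (proj1 Hp) Hc)).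
  revert A B. inner_expand. intros. lra.
Qed.

Variable P : X -> X.
Hypotheses (HC : convex C) (HP : forall z, is_proj C z (P z)).

Lemma proj_firmly_nonexpansive x y :
  hinner (hsub (P x) (P y)) (hsub (P x) (P y)) <= hinner (hsub x y) (hsub (P x) (P y)).
Proof.
  assert (A := proj_variational x (P x) HC (HP x) (P y) (proj1 (HP y))).
  assert (B := proj_variational y (P y) HC (HP y) (P x) (proj1 (HP x))).
  revert A B. inner_expand. intros. lra.
Qed.

Lemma proj_nonexpansive x y :
  hinner (hsub (P x) (P y)) (hsub (P x) (P y)) <= hinner (hsub x y) (hsub x y).
Proof.
  assert (A := proj_firmly_nonexpansive x y).
  assert (B := hinner_pos X (hsub (hsub x y) (hsub (P x) (P y)))).
  revert A B. inner_expand. intros. lra.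
Qed.

Lemma proj_translate_normal r w s : 0 <= s ->
  (forall c, C c -> hinner w (hsub c (P r)) <= 0) ->
  P (hadd r (hscal s w)) = P r.
Proof.
  intros Hs Hw. symmetry. apply (proj_unique (hadd r (hscal s w))); auto.
  apply proj_of_variational; [apply HP|]. intros c Hc.
  assert (A := proj_variational r (P r) HC (HP r) c Hc).
  assert (B : s * hinner w (hsub c (P r)) <= 0) by (specialize (Hw c Hc); nra).
  revert A B. inner_expand. intros. lra.
Qed.

End Projections.

Lemma affine_proj_translate {X : HilbertSpace} (U : X -> Prop) (PU : X -> X) w :
  affine_subspace U -> (forall z, is_proj U z (PU z)) ->
  (forall c c', U c -> U c' -> hinner w (hsub c c') = 0) ->
  forall z s, PU (hsub z (hscal s w)) = PU z.
Proof.
  intros HU HPU Hw z s. symmetry.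
  apply (proj_unique X U (hsub z (hscal s w))); [now apply affine_subspace_convex| |apply HPU].
  apply proj_of_variational; [apply HPU|]. intros c Hc.
  assert (A := affine_proj_orthogonal X U z (PU z) HU (HPU z) c Hc).
  assert (B := f_equal (Rmult s) (Hw c (PU z) Hc (proj1 (HPU z)))).
  rewrite Rmult_0_r in B. revert A B. inner_expand. intros. lra.
Qed.

Definition firmly_nonexpansive {X : HilbertSpace} (T : X -> X) : Prop :=
  forall x y,
    hinner (hsub (T x) (T y)) (hsub (T x) (T y))
    + hinner (hsub (hsub x (T x)) (hsub y (T y))) (hsub (hsub x (T x)) (hsub y (T y)))
    <= hinner (hsub x y) (hsub x y).

Lemma firmly_nonexpansive_displacement_cv {X : HilbertSpace} (T : X -> X)
    (x y : nat -> X) (v : X) :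
  firmly_nonexpansive T ->
  (forall n, x (S n) = T (x n)) -> (forall n, y (S n) = T (y n)) ->
  (forall n, hsub (y n) (y (S n)) = v) ->
  Un_cv (fun n => hinner (hsub (hsub (x n) (x (S n))) v)
                         (hsub (hsub (x n) (x (S n))) v)) 0.
Proof.
  intros HT Hx Hy Hv.
  apply (Un_cv_0_of_decrease (fun n => hinner (hsub (x n) (y n)) (hsub (x n) (y n))));
    [intro; apply hinner_pos.. |].
  intro n. rewrite <- (Hv n), !Hx, !Hy. apply HT.
Qed.

Section DouglasRachford.

Variables (X : HilbertSpace) (U V : X -> Prop) (PU PV : X -> X).
Hypotheses (HU : affine_subspace U) (HV : convex V)
  (HPU : forall z, is_proj U z (PU z)) (HPV : forall z, is_proj V z (PV z)).

Let T := DR PU PV.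

Lemma DR_displacement x : hsub x (T x) = hsub (PU x) (PV (hsub (hscal 2 (PU x)) x)).
Proof. apply hsub_eq. unfold T, DR. inner_expand. ring. Qed.

Lemma DR_firmly_nonexpansive : firmly_nonexpansive T.
Proof.
  intros x y.
  assert (A := proj_firmly_nonexpansive X U PU (affine_subspace_convex U HU) HPU x y).
  assert (B := proj_firmly_nonexpansive X V PV HV HPV
                 (hsub (hscal 2 (PU x)) x) (hsub (hscal 2 (PU y)) y)).
  unfold T, DR. revert A B.
  set (p := PU x). set (p' := PU y).
  set (q := PV (hsub (hscal 2 p) x)). set (q' := PV (hsub (hscal 2 p') y)).
  clearbody p p' q q'. inner_expand. intros. lra.
Qed.

(* [2 P_U q - q] is the reflection of [q] in [U]; it has the same projection [P_U q]
   and reflects back to [q], which [P_V] fixes. *)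
Lemma ran_DR_proj_gap q : V q -> ran_Id_minus T (hsub (PU q) q).
Proof.
  intro Hq. set (r := hsub (hscal 2 (PU q)) q). exists r.
  assert (Er : PU r = PU q).
  { symmetry. apply (proj_unique X U r); [now apply affine_subspace_convex| |apply HPU].
    apply proj_of_variational; [apply HPU|]. intros c Hc.
    assert (A := affine_proj_orthogonal X U q (PU q) HU (HPU q) c Hc).
    revert A. unfold r. inner_expand. intros. lra. }
  assert (Eq : hsub (hscal 2 (PU r)) r = q) by (rewrite Er; apply hsub_eq; unfold r;
    inner_expand; ring).
  rewrite DR_displacement, Eq, (proj_of_mem X V q (PV q) Hq (HPV q)), Er.
  apply hsub_eq. unfold r. inner_expand. ring.
Qed.

Variable y0 : X.
Let p0 := PU y0.
Let q0 := PV (hsub (hscal 2 p0) y0).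
Let v := hsub p0 q0.

Hypothesis v_minimal : forall z, ran_Id_minus T z -> hinner v v <= hinner z z.

Lemma gap_le_proj_gap q : V q -> hinner v v <= hinner (hsub (PU q) q) (hsub (PU q) q).
Proof. intro Hq. apply v_minimal, ran_DR_proj_gap, Hq. Qed.

Lemma q0_mem : V q0.
Proof. apply HPV. Qed.

Lemma p0_mem : U p0.
Proof. apply HPU. Qed.

Lemma gap_orthogonal_U c : U c -> hinner (hsub q0 p0) (hsub c p0) = 0.
Proof.
  apply (affine_proj_orthogonal X U); auto.
  split; [apply p0_mem|]. intros u Hu. apply sq_le_hnorm.
  assert (A := gap_le_proj_gap q0 q0_mem).
  assert (B := hnorm_le_sq _ _ (proj2 (HPU q0) u Hu)).
  revert A B. unfold v. inner_expand. intros. lra.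
Qed.

(* Comparing [v] with the gaps [P_U q_t - q_t] at [q_t := t c + (1-t) q0]: the
   orthogonality of [v] to [U] lets [P_U q_t] be replaced by [t P_U c + (1-t) p0]. *)
Lemma gap_normal_V c : V c -> hinner v (hsub c q0) <= 0.
Proof.
  intro Hc. cut (2 * hinner v (hsub c q0) <= 0); [lra|].
  apply (nonpos_of_scaled_le _
    (hinner (hsub (hsub (PU c) c) v) (hsub (hsub (PU c) c) v))).
  intros t Ht.
  assert (Hqt := HV c q0 t Hc q0_mem ltac:(lra)).
  assert (Hpt := proj2 HU (PU c) p0 t (proj1 (HPU c)) p0_mem).
  assert (A := gap_le_proj_gap _ Hqt).
  assert (B := hnorm_le_sq _ _ (proj2 (HPU (hadd (hscal t c) (hscal (1 - t) q0))) _ Hpt)).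
  assert (D := f_equal (Rmult t) (gap_orthogonal_U (PU c) (proj1 (HPU c)))).
  rewrite Rmult_0_r in D. revert A B D. unfold v. inner_expand. intros. nra.
Qed.

Lemma proj_U_translate_gap z s : PU (hsub z (hscal s v)) = PU z.
Proof.
  apply (affine_proj_translate U); auto. intros c c' Hc Hc'.
  assert (A := gap_orthogonal_U c Hc). assert (B := gap_orthogonal_U c' Hc').
  revert A B. unfold v. inner_expand. intros. lra.
Qed.

Let ray (n : nat) : X := hsub y0 (hscal (INR n) v).

Lemma ray_DR n : ray (S n) = T (ray n).
Proof.
  assert (EU : PU (ray n) = p0) by apply proj_U_translate_gap.
  assert (EV : PV (hsub (hscal 2 p0) (ray n)) = q0).
  { assert (E : hsub (hscal 2 p0) (ray n) = hadd (hsub (hscal 2 p0) y0) (hscal (INR n) v))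
      by (apply hsub_eq; unfold ray; inner_expand; ring).
    rewrite E. apply (proj_translate_normal X V PV HV HPV); [apply pos_INR|].
    intros c Hc. apply gap_normal_V, Hc. }
  unfold T, DR. rewrite EU, EV. apply hsub_eq. unfold ray, v. rewrite S_INR.
  inner_expand. ring.
Qed.

Lemma ray_displacement n : hsub (ray n) (ray (S n)) = v.
Proof. apply hsub_eq. unfold ray. rewrite S_INR. inner_expand. ring. Qed.

Lemma DR_shadow_asymptotically_regular x :
  Un_cv (fun n => hnorm (hsub (PU (Nat.iter n T x)) (PU (Nat.iter (S n) T x)))) 0.
Proof.
  set (xs := fun n => Nat.iter n T x).
  apply (Un_cv_hnorm_0 (fun n => hsub (PU (xs n)) (PU (xs (S n))))
                       (fun n => hinner (hsub (hsub (xs n) (xs (S n))) v)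
                                          (hsub (hsub (xs n) (xs (S n))) v))).
  - intro n. cbv beta. rewrite <- (proj_U_translate_gap (xs n) 1).
    eapply Rle_trans;
      [apply (proj_nonexpansive X U PU (affine_subspace_convex U HU) HPU)|].
    right. inner_expand. ring.
  - apply (firmly_nonexpansive_displacement_cv T xs ray v DR_firmly_nonexpansive);
      [reflexivity|apply ray_DR|apply ray_displacement].
Qed.

End DouglasRachford.

Theorem proposition4p6 (X : HilbertSpace) (U V : X -> Prop)
  (PU PV : X -> X) (v : X) :
  affine_subspace U -> is_closed U ->
  nonempty V -> is_closed V -> convex V ->
  (forall x, is_proj U x (PU x)) ->
  (forall x, is_proj V x (PV x)) ->
  is_proj (closure (ran_Id_minus (DR PU PV))) hzero v ->
  ran_Id_minus (DR PU PV) v ->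
  forall x : X,
    Un_cv (fun n => hnorm (hsub (PU (Nat.iter n (DR PU PV) x))
                                (PU (Nat.iter (S n) (DR PU PV) x)))) 0.
Proof.
  intros HU _ _ _ HV HPU HPV Hv [y0 Hy0] x.
  apply (DR_shadow_asymptotically_regular X U V PU PV HU HV HPU HPV y0).
  rewrite <- DR_displacement, <- Hy0.
  intros z Hz. assert (H := proj2 Hv z (closure_sub _ z Hz)).
  apply hnorm_le_sq in H. revert H. inner_expand. intros. lra.
Qed.
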